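(* For all sufficiently large $N$, the semigroup generated by $\Gamma_N$ is Zariski dense in $\mathrm{SL}(3,\mathbb R)$.
   Context: Let $A_1=\begin{pmatrix}1&1&1\\0&1&0\\0&0&1\end{pmatrix}$, $A_2=\begin{pmatrix}1&0&0\\1&1&1\\0&0&1\end{pmatrix}$, $A_3=\begin{pmatrix}1&0&0\\0&1&0\\1&1&1\end{pmatrix}$, $\Gamma=\{A_i^nA_j: i\ne j\in\{1,2,3\},\ n\ge1\}$, and let $(\Gamma_N)_N$ be an increasing sequence of finite subsets of $\Gamma$ with $\bigcup_N\Gamma_N=\Gamma$. The Zariski topology on $\mathrm{SL}(3,\mathbb R)$ has as closed sets the common zero sets of families of polynomials in the matrix entries. *)

From HB Require Import structures.
From mathcomp Require Import all_boot all_order all_algebra.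
From mathcomp Require Import reals.
From mathcomp Require Import mpoly.
Set Implicit Arguments. Unset Strict Implicit. Unset Printing Implicit Defensive.
Import Order.TTheory GRing.Theory Num.Theory.
Local Open Scope ring_scope.

(* The three generators A_1, A_2, A_3 (indexed by i : 'I_3, i.e. A_(i+1)):
   identity matrix with row i replaced by (1 1 1). *)
Definition Agen (R : realType) (i : 'I_3) : 'M[R]_3 :=
  \matrix_(r < 3, c < 3) (if r == c then 1 else if r == i then 1 else 0).

Definition inGamma (R : realType) (M : 'M[R]_3) : Prop :=
  exists (i j : 'I_3) (n : nat), i != j /\ (1 <= n)%N /\ M = Agen R i ^+ n *m Agen R j.

Inductive semigroup_gen (R : realType) (S : 'M[R]_3 -> Prop) : 'M[R]_3 -> Prop :=
  | sg_base M : S M -> semigroup_gen S M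
  | sg_mul M M' : semigroup_gen S M -> semigroup_gen S M' -> semigroup_gen S (M *m M').

Definition entries (R : realType) (M : 'M[R]_3) : 'I_(3 * 3) -> R :=
  fun k => mxvec M 0 k.

(* Zariski density in SL(3,R): every polynomial in the matrix entries vanishing
   on S vanishes on all of SL(3,R) (i.e. the Zariski closure of S contains SL(3,R)). *)
Definition zariski_dense_SL3 (R : realType) (S : 'M[R]_3 -> Prop) : Prop :=
  forall p : {mpoly R[3 * 3]},
    (forall M, S M -> p.@[entries M] = 0) ->
    forall M : 'M[R]_3, \det M = 1 -> p.@[entries M] = 0.

From HB Require Import structures.
From mathcomp Require Import all_boot all_order all_algebra.
From mathcomp Require Import reals mpoly mxtens ring.
Set Implicit Arguments. Unset Strict Implicit. Unset Printing Implicit Defensive.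
Import Order.TTheory GRing.Theory Num.Theory.
Local Open Scope ring_scope.

(* Call F : 'M_m -> R admissible if it is a matrix coefficient M |-> u rho(M) v of a
   multiplicative map rho and is polynomial along every affine line.  Polynomials in the
   entries are admissible (direct sums and tensor products of the rho's), and admissible
   functions are stable under M |-> F (A M B), so the set of matrices on which every
   admissible function vanishing on a semigroup S vanishes is again a semigroup.  By
   Cayley-Hamilton applied to rho(g) it contains the inverse of each of its invertible
   elements, and since admissible functions are polynomial on lines it contains the
   whole line 1 + tE as soon as it contains 1 + E with E^2 = 0.  For S generated by
   Gamma_N with N large it contains A_i A_(i+1) and A_i^2 A_(i+1), hence every A_i and
   its inverse, hence (through explicit words) the elementary matrices 1 + 4 E_ij, hence
   all elementary matrices, and these generate SL(3). *)

Section MatrixCoefficients.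
Variables (R : comRingType) (m : nat).

Definition mxrep_coef (F : 'M[R]_m -> R) : Prop :=
  exists n (rho : 'M[R]_m -> 'M[R]_n) (u : 'rV[R]_n) (v : 'cV[R]_n),
    [/\ {morph rho : A B / A *m B}, rho 1%:M = 1%:M
      & forall M, F M = (u *m rho M *m v) 0 0].

Lemma eq_mxrep_coef (F G : 'M[R]_m -> R) : F =1 G -> mxrep_coef F -> mxrep_coef G.
Proof.
move=> FG [n [rho [u [v [rhoM rho1 Frho]]]]].
by exists n, rho, u, v; split=> // M; rewrite -FG.
Qed.

Lemma mxrep_coef_cst (c : R) : mxrep_coef (fun _ => c).
Proof.
exists 1%N, (fun _ => 1%:M), c%:M, 1%:M; split=> [A B||M] //; first by rewrite mul1mx.
by rewrite !mulmx1 mxE eqxx mulr1n.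
Qed.

Lemma mxrep_coef_entry (i j : 'I_m) : mxrep_coef (fun M => M i j).
Proof.
exists m, id, (delta_mx 0 i), (delta_mx j 0); split=> // M.
by rewrite -rowE -colE !mxE.
Qed.

Lemma mxrep_coefD (F G : 'M[R]_m -> R) :
  mxrep_coef F -> mxrep_coef G -> mxrep_coef (fun M => F M + G M).
Proof.
move=> [n [rho [u [v [rhoM rho1 Frho]]]]] [n' [rho' [u' [v' [rhoM' rho1' Grho]]]]].
exists (n + n')%N, (fun M => block_mx (rho M) 0 0 (rho' M)), (row_mx u u'),
  (col_mx v v'); split=> [A B||M].
- by rewrite mulmx_block rhoM rhoM' !mulmx0 !mul0mx !addr0 !add0r.
- by rewrite rho1 rho1' -scalar_mx_block.
- rewrite Frho Grho mul_row_block !mulmx0 !addr0 !add0r mul_row_col.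
  by rewrite [RHS]mxE.
Qed.

Lemma mxrep_coefM (F G : 'M[R]_m -> R) :
  mxrep_coef F -> mxrep_coef G -> mxrep_coef (fun M => F M * G M).
Proof.
move=> [n [rho [u [v [rhoM rho1 Frho]]]]] [n' [rho' [u' [v' [rhoM' rho1' Grho]]]]].
exists (n * n')%N, (fun M => rho M *t rho' M), (u *t u'), (v *t v'); split=> [A B||M].
- by rewrite rhoM rhoM' tensmx_mul.
- rewrite rho1 rho1'; apply/matrixP=> i j.
  case: (mxtens_indexP i) => i0 i1; case: (mxtens_indexP j) => j0 j1.
  rewrite tensmxE !mxE -natrM mulnb (inj_eq (can_inj (@mxtens_indexK _ _))).
  by rewrite xpair_eqE.
- have -> : (0 : 'I_(1 * 1)) = mxtens_index (0, 0) by apply: val_inj.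
  by rewrite Frho Grho -tensmxE -!tensmx_mul.
Qed.

Lemma mxrep_coef_mulmx (F : 'M[R]_m -> R) (A B : 'M[R]_m) :
  mxrep_coef F -> mxrep_coef (fun M => F (A *m M *m B)).
Proof.
move=> [n [rho [u [v [rhoM rho1 Frho]]]]].
by exists n, rho, (u *m rho A), (rho B *m v); split=> // M; rewrite Frho !rhoM !mulmxA.
Qed.

End MatrixCoefficients.

Lemma mxrep_coef1_eq0 (R : fieldType) m (F : 'M[R]_m -> R) (g : 'M[R]_m) :
  mxrep_coef F -> g \in unitmx -> (forall k, F (g ^+ k.+1) = 0) -> F 1%:M = 0.
Proof.
case=> [[|n] [rho [u [v [rhoM rho1 Frho]]]]] g_unit Fg; rewrite Frho rho1 mulmx1.
  by rewrite mxE big_ord0.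
have rhoX k : rho (g ^+ k) = rho g ^+ k.
  elim: k => [|k IHk]; first by rewrite !expr0 -!idmxE rho1.
  by rewrite exprS -mulmxE rhoM IHk mulmxE -exprS.
have rhog_unit : rho g \in unitmx.
  have : rho g *m rho (invmx g) = 1%:M by rewrite -rhoM mulmxV.
  by case/mulmx1_unit.
(* Cayley-Hamilton: only the constant term p`_0 = +-det (rho g) survives. *)
set p := char_poly (rho g).
have : (u *m horner_mx (rho g) p *m v) 0 0 = p`_0 * (u *m v) 0 0.
  rewrite -[p in horner_mx _ p]coefK poly_def size_char_poly rmorph_sum /=.
  rewrite mulmx_sumr mulmx_suml summxE big_ord_recl big1 => [|i _].
    by rewrite addr0 linearZ /= expr0 rmorph1 -idmxE -scalemxAr mulmx1 -scalemxAl mxE.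
  rewrite linearZ /= rmorphXn /= horner_mx_X -scalemxAr -scalemxAl mxE.
  by rewrite -rhoX -Frho Fg mulr0.
rewrite Cayley_Hamilton mulmx0 mul0mx mxE => /esym/eqP; rewrite mulf_eq0 => /orP[|/eqP //].
by rewrite char_poly_det mulf_eq0 signr_eq0 -[_ == 0]negbK -unitfE -unitmxE rhog_unit.
Qed.

Lemma poly_natr_roots_eq0 (R : numDomainType) (P : {poly R}) :
  (forall k, P.[k.+1%:R] = 0) -> P = 0.
Proof.
move=> Pk; apply: (@roots_geq_poly_eq0 _ P [seq k.+1%:R | k <- iota 0 (size P)]).
- by apply/allP => _ /mapP[k _ ->]; apply/rootP.
- by rewrite map_inj_uniq ?iota_uniq // => i j /eqP; rewrite eqr_nat eqSS => /eqP.
- by rewrite size_map size_iota.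
Qed.

Definition elemmx (R : pzRingType) n (i j : 'I_n) (t : R) : 'M[R]_n :=
  1%:M + t *: delta_mx i j.

Section AdmissibleFunctions.
Variables (R : numFieldType) (m : nat).

Definition poly_on_lines (F : 'M[R]_m -> R) : Prop :=
  forall A B : 'M[R]_m, exists P : {poly R}, forall t, F (A + t *: B) = P.[t].

Definition admissible (F : 'M[R]_m -> R) : Prop := mxrep_coef F /\ poly_on_lines F.

Lemma eq_admissible (F G : 'M[R]_m -> R) : F =1 G -> admissible F -> admissible G.
Proof.
move=> FG [Frep Flines]; split; first exact: eq_mxrep_coef Frep.
by move=> A B; have [P FP] := Flines A B; exists P => t; rewrite -FG.
Qed.

Lemma admissible_cst (c : R) : admissible (fun _ => c).
Proof.
by split; [exact: mxrep_coef_cst | exists c%:P => t; rewrite hornerC].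
Qed.

Lemma admissible_entry (i j : 'I_m) : admissible (fun M => M i j).
Proof.
split=> [|A B]; first exact: mxrep_coef_entry.
by exists ((A i j)%:P + B i j *: 'X) => t; rewrite !hornerE !mxE mulrC.
Qed.

Lemma admissibleD (F G : 'M[R]_m -> R) :
  admissible F -> admissible G -> admissible (fun M => F M + G M).
Proof.
move=> [Frep Flines] [Grep Glines]; split=> [|A B]; first exact: mxrep_coefD.
have [P FP] := Flines A B; have [Q GQ] := Glines A B.
by exists (P + Q) => t; rewrite hornerD FP GQ.
Qed.

Lemma admissibleM (F G : 'M[R]_m -> R) :
  admissible F -> admissible G -> admissible (fun M => F M * G M).
Proof.
move=> [Frep Flines] [Grep Glines]; split=> [|A B]; first exact: mxrep_coefM.
have [P FP] := Flines A B; have [Q GQ] := Glines A B.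
by exists (P * Q) => t; rewrite hornerM FP GQ.
Qed.

Lemma admissible_mulmx (F : 'M[R]_m -> R) (A B : 'M[R]_m) :
  admissible F -> admissible (fun M => F (A *m M *m B)).
Proof.
move=> [Frep Flines]; split=> [|C D]; first exact: mxrep_coef_mulmx.
have [P FP] := Flines (A *m C *m B) (A *m D *m B).
by exists P => t; rewrite -FP mulmxDr mulmxDl -scalemxAr -scalemxAl.
Qed.

Lemma admissible_sum (I : Type) (r : seq I) (F : I -> 'M[R]_m -> R) :
  (forall i, admissible (F i)) -> admissible (fun M => \sum_(i <- r) F i M).
Proof.
move=> FA; elim: r => [|i r IHr].
  by apply: eq_admissible (admissible_cst 0) => M; rewrite big_nil.
by apply: eq_admissible (admissibleD (FA i) IHr) => M; rewrite big_cons.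
Qed.

Lemma admissible_prod (I : Type) (r : seq I) (F : I -> 'M[R]_m -> R) :
  (forall i, admissible (F i)) -> admissible (fun M => \prod_(i <- r) F i M).
Proof.
move=> FA; elim: r => [|i r IHr].
  by apply: eq_admissible (admissible_cst 1) => M; rewrite big_nil.
by apply: eq_admissible (admissibleM (FA i) IHr) => M; rewrite big_cons.
Qed.

Lemma admissibleX (F : 'M[R]_m -> R) k : admissible F -> admissible (fun M => F M ^+ k).
Proof.
move=> FA; elim: k => [|k IHk].
  by apply: eq_admissible (admissible_cst 1) => M; rewrite expr0.
by apply: eq_admissible (admissibleM FA IHk) => M; rewrite exprS.
Qed.

Lemma admissible_meval (p : {mpoly R[m * m]}) :
  admissible (fun M => p.@[fun k => mxvec M 0 k]).
Proof.
apply: eq_admissible (fun M => esym (mevalE _ _)) _.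
apply: admissible_sum => mu; apply: admissibleM; first exact: admissible_cst.
apply: admissible_prod => k; apply: admissibleX.
case/mxvec_indexP: k => i j.
by apply: eq_admissible (admissible_entry i j) => M; rewrite mxvecE.
Qed.

Definition adm_closure (S : 'M[R]_m -> Prop) (M : 'M[R]_m) : Prop :=
  forall F, admissible F -> (forall A, S A -> F A = 0) -> F M = 0.

Lemma adm_closure_base (S : 'M[R]_m -> Prop) M : S M -> adm_closure S M.
Proof. by move=> SM F _; apply. Qed.

Variable S : 'M[R]_m -> Prop.
Hypothesis S_mul : forall A B, S A -> S B -> S (A *m B).

Lemma adm_closureM A B : adm_closure S A -> adm_closure S B -> adm_closure S (A *m B).
Proof.
have cl_mulS A' C : adm_closure S A' -> S C -> adm_closure S (A' *m C).
  move=> clA SC F FA FS; rewrite -[A']mul1mx.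
  apply: (clA (fun M => F (1%:M *m M *m C))) => [|D SD]; first exact: admissible_mulmx.
  by rewrite mul1mx; apply/FS/S_mul.
move=> clA clB F FA FS; rewrite -[B]mulmx1 mulmxA.
apply: (clB (fun M => F (A *m M *m 1%:M))) => [|C SC]; first exact: admissible_mulmx.
by rewrite mulmx1; apply: cl_mulS.
Qed.

Lemma adm_closureX A k : adm_closure S A -> adm_closure S (A ^+ k.+1).
Proof.
move=> clA; elim: k => [|k IHk]; first by rewrite expr1.
by rewrite exprS -mulmxE; apply: adm_closureM.
Qed.

Lemma adm_closureV A : adm_closure S A -> A \in unitmx -> adm_closure S (invmx A).
Proof.
move=> clA A_unit F FA FS.
have FX k : F (A ^+ k) = 0.
  case: k => [|k]; last exact: adm_closureX.
  by rewrite expr0 -idmxE; apply: (mxrep_coef1_eq0 FA.1 A_unit) => k; apply: adm_closureX.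
have := mxrep_coef1_eq0 (mxrep_coef_mulmx 1%:M (invmx A) FA.1) A_unit.
by rewrite !mul1mx; apply=> k; rewrite mul1mx exprSr -mulmxE mulmxK.
Qed.

Lemma adm_closure_unipotent E t :
  E *m E = 0 -> adm_closure S (1%:M + E) -> adm_closure S (1%:M + t *: E).
Proof.
move=> EE0 clE F FA FS; have [P FP] := FA.2 1%:M E.
have expE k : (1%:M + E) ^+ k = 1%:M + k%:R *: E.
  elim: k => [|k IHk]; first by rewrite expr0 scale0r addr0 idmxE.
  rewrite exprS IHk -mulmxE mulmxDl !mulmxDr !mul1mx mulmx1 -scalemxAr EE0.
  by rewrite scaler0 addr0 mulrS scalerDl scale1r addrA addrAC.
rewrite FP; suff -> : P = 0 by rewrite horner0.
by apply: poly_natr_roots_eq0 => k; rewrite -FP -expE adm_closureX.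
Qed.

Lemma adm_closure_elemmx i j c t : i != j -> c != 0 ->
  adm_closure S (elemmx i j c) -> adm_closure S (elemmx i j t).
Proof.
move=> ij c0; rewrite /elemmx -[t](divfK c0) -scalerA.
apply: adm_closure_unipotent.
by rewrite -scalemxAl -scalemxAr mul_delta_mx_0 ?scaler0 // eq_sym.
Qed.

End AdmissibleFunctions.

Section Matrix33.
Variable R : comRingType.

Definition mk33 (a b c d e f g h k : R) : 'M[R]_3 :=
  \matrix_(i < 3, j < 3)
    nth a (nth [::] [:: [:: a; b; c]; [:: d; e; f]; [:: g; h; k]] i) j.

Lemma mx33E (M : 'M[R]_3) :
  M = mk33 (M 0 0) (M 0 1) (M 0 2) (M 1 0) (M 1 1) (M 1 2) (M 2 0) (M 2 1) (M 2 2).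
Proof.
apply/matrixP => i j; rewrite mxE.
by case: i j => [[|[|[|i]]] Hi] [[|[|[|j]]] Hj] //=; congr (M _ _); apply: val_inj.
Qed.

Lemma mul33 (a b c d e f g h k a' b' c' d' e' f' g' h' k' : R) :
  mk33 a b c d e f g h k *m mk33 a' b' c' d' e' f' g' h' k' =
  mk33 (a * a' + b * d' + c * g') (a * b' + b * e' + c * h') (a * c' + b * f' + c * k')
       (d * a' + e * d' + f * g') (d * b' + e * e' + f * h') (d * c' + e * f' + f * k')
       (g * a' + h * d' + k * g') (g * b' + h * e' + k * h') (g * c' + h * f' + k * k').
Proof.
apply/matrixP => i j; rewrite !mxE !big_ord_recr big_ord0 /= !mxE /= add0r.
by case: i j => [[|[|[|i]]] Hi] [[|[|[|j]]] Hj].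
Qed.

Lemma det33 (a b c d e f g h k : R) :
  \det (mk33 a b c d e f g h k) =
  a * e * k + b * f * g + c * d * h - c * e * g - b * d * k - a * f * h.
Proof.
rewrite (expand_det_row _ 0) !big_ord_recr big_ord0 /= add0r /cofactor.
rewrite !(expand_det_row _ 0) !big_ord_recr !big_ord0 /= !add0r /cofactor.
by rewrite !det_mx11 !mxE /= !add0n; ring.
Qed.

End Matrix33.

Ltac mx33_elemmx := repeat rewrite [elemmx _ _ _]mx33E !mxE /=.

Section SL3Generation.
Variables (R : fieldType) (G : 'M[R]_3 -> Prop).
Hypothesis G_mul : forall A B, G A -> G B -> G (A *m B).
Hypothesis G_elemmx : forall i j t, i != j -> G (elemmx i j t).

Lemma G_block1 f h k : k - f * h = 1 -> G (mk33 1 0 0 0 1 f 0 h k).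
Proof.
move/eqP; rewrite subr_eq => /eqP ->.
have -> : mk33 1 0 0 0 1 f 0 h (1 + f * h) = elemmx 2 1 h *m elemmx 1 2 f.
  by mx33_elemmx; rewrite mul33; congr mk33; ring.
by apply: G_mul; apply: G_elemmx.
Qed.

Lemma G_block e f h k : e * k - f * h = 1 -> G (mk33 1 0 0 0 e f 0 h k).
Proof.
have G_h_neq0 e' f' h' k' : h' != 0 -> e' * k' - f' * h' = 1 ->
    G (mk33 1 0 0 0 e' f' 0 h' k').
  move=> h'0 det1; set s := (e' - 1) / h'.
  have -> : mk33 1 0 0 0 e' f' 0 h' k' =
      elemmx 1 2 s *m mk33 1 0 0 0 1 (f' - s * k') 0 h' k'.
    by mx33_elemmx; rewrite mul33; congr mk33; rewrite /s; field.
  apply: G_mul; first exact: G_elemmx.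
  by apply: G_block1; rewrite -det1 /s; field.
have [h0 det1|] := eqVneq h 0; last exact: G_h_neq0.
have -> : mk33 1 0 0 0 e f 0 h k = elemmx 2 1 (-1) *m mk33 1 0 0 0 e f 0 e (k + f).
  by mx33_elemmx; rewrite mul33 h0; congr mk33; ring.
apply: G_mul; first exact: G_elemmx.
apply: G_h_neq0; last by rewrite -det1 h0; ring.
by apply: contra_eq_neq det1 => ->; rewrite h0 mul0r mulr0 subrr eq_sym oner_neq0.
Qed.

Lemma G_pivot b c d e f g h k :
  \det (mk33 1 b c d e f g h k) = 1 -> G (mk33 1 b c d e f g h k).
Proof.
move=> det1.
have -> : mk33 1 b c d e f g h k =
    elemmx 1 0 d *m (elemmx 2 0 g *m
      mk33 1 0 0 0 (e - d * b) (f - d * c) 0 (h - g * b) (k - g * c))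
    *m elemmx 0 1 b *m elemmx 0 2 c.
  by mx33_elemmx; rewrite !mul33; congr mk33; ring.
apply: G_mul; last exact: G_elemmx.
apply: G_mul; last exact: G_elemmx.
apply: G_mul; first exact: G_elemmx.
apply: G_mul; first exact: G_elemmx.
by apply: G_block; rewrite -[X in _ = X]det1 det33; ring.
Qed.

Theorem SL3_generated M : \det M = 1 -> G M.
Proof.
suff G33 a b c d e f g h k : \det (mk33 a b c d e f g h k) = 1 -> G (mk33 a b c d e f g h k).
  by rewrite [M]mx33E; apply: G33.
have G_d_neq0 a' b' c' d' e' f' g' h' k' : d' != 0 ->
    \det (mk33 a' b' c' d' e' f' g' h' k') = 1 -> G (mk33 a' b' c' d' e' f' g' h' k').
  move=> d'0 det1; set s := (a' - 1) / d'.
  have -> : mk33 a' b' c' d' e' f' g' h' k' =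
      elemmx 0 1 s *m mk33 1 (b' - s * e') (c' - s * f') d' e' f' g' h' k'.
    by mx33_elemmx; rewrite mul33; congr mk33; rewrite /s; field.
  apply: G_mul; first exact: G_elemmx.
  by apply: G_pivot; rewrite -[X in _ = X]det1 !det33 /s; field.
have [d0|] := eqVneq d 0; last exact: G_d_neq0.
have [g0|g_neq0] := eqVneq g 0.
  move=> det1; have -> : mk33 a b c d e f g h k =
      elemmx 1 0 (-1) *m mk33 a b c a (e + b) (f + c) g h k.
    by mx33_elemmx; rewrite mul33 d0; congr mk33; ring.
  apply: G_mul; first exact: G_elemmx.
  apply: G_d_neq0; last by rewrite -[X in _ = X]det1 !det33 d0; ring.
  apply: contra_eq_neq det1 => ->.
  by rewrite det33 d0 g0 !(mulr0, mul0r, addr0, subr0) eq_sym oner_neq0.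
move=> det1; set s := (a - 1) / g.
have -> : mk33 a b c d e f g h k =
    elemmx 0 2 s *m mk33 1 (b - s * h) (c - s * k) d e f g h k.
  by mx33_elemmx; rewrite mul33; congr mk33; rewrite /s; field.
apply: G_mul; first exact: G_elemmx.
by apply: G_pivot; rewrite -[X in _ = X]det1 !det33 /s; field.
Qed.

End SL3Generation.

Lemma invmx_eq (R : comUnitRingType) n (A B : 'M[R]_n) : A *m B = 1%:M -> invmx A = B.
Proof.
move=> AB; have [A_unit _] := mulmx1_unit AB.
by rewrite -[invmx A]mulmx1 -AB mulmxA mulVmx ?mul1mx.
Qed.

Lemma ord3_cases (P : 'I_3 -> Prop) : P 0 -> P 1 -> P 2 -> forall i, P i.
Proof.
move=> P0 P1 P2 [[|[|[|//]]] Hi];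
  [have -> : Ordinal Hi = 0 | have -> : Ordinal Hi = 1 | have -> : Ordinal Hi = 2] => //;
  exact: val_inj.
Qed.

Section Generators.
Variable R : realType.

Lemma det_Agen i : \det (Agen R i) = 1.
Proof. by case: i => [[|[|[|//]]] ?]; rewrite [Agen _ _]mx33E !mxE det33 /=; ring. Qed.

Lemma invmx_Agen0 : invmx (Agen R 0) = mk33 1 (-1) (-1) 0 1 0 0 0 1.
Proof.
by apply: invmx_eq; rewrite [Agen _ _]mx33E [RHS]mx33E !mxE /= mul33; congr mk33; ring.
Qed.

Lemma invmx_Agen1 : invmx (Agen R 1) = mk33 1 0 0 (-1) 1 (-1) 0 0 1.
Proof.
by apply: invmx_eq; rewrite [Agen _ _]mx33E [RHS]mx33E !mxE /= mul33; congr mk33; ring.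
Qed.

Lemma invmx_Agen2 : invmx (Agen R 2) = mk33 1 0 0 0 1 0 (-1) (-1) 1.
Proof.
by apply: invmx_eq; rewrite [Agen _ _]mx33E [RHS]mx33E !mxE /= mul33; congr mk33; ring.
Qed.

Ltac mx33_word :=
  rewrite ?invmx_Agen0 ?invmx_Agen1 ?invmx_Agen2;
  rewrite 1?[Agen _ 0]mx33E 1?[Agen _ 1]mx33E 1?[Agen _ 2]mx33E [elemmx _ _ _]mx33E !mxE /=;
  do 7 rewrite mul33 ?(mul0r, mulr0, mul1r, mulr1, add0r, addr0, mulN1r, mulrN1, opprK);
  congr mk33; ring.

Lemma elemmx21_word :
  Agen R 0 *m Agen R 1 *m invmx (Agen R 0) *m Agen R 2
  *m Agen R 0 *m invmx (Agen R 1) *m invmx (Agen R 0) *m Agen R 2 = elemmx 2 1 4.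
Proof. mx33_word. Qed.

Lemma elemmx02_word :
  Agen R 0 *m Agen R 1 *m Agen R 2 *m invmx (Agen R 0)
  *m invmx (Agen R 1) *m Agen R 0 *m invmx (Agen R 2) *m invmx (Agen R 1) = elemmx 0 2 4.
Proof. mx33_word. Qed.

Lemma elemmx01_word :
  Agen R 0 *m Agen R 1 *m invmx (Agen R 2) *m invmx (Agen R 0)
  *m invmx (Agen R 1) *m Agen R 0 *m Agen R 2 *m invmx (Agen R 1) = elemmx 0 1 4.
Proof. mx33_word. Qed.

Lemma elemmx20_word :
  Agen R 0 *m invmx (Agen R 1) *m invmx (Agen R 0) *m Agen R 2
  *m Agen R 0 *m Agen R 1 *m invmx (Agen R 0) *m Agen R 2 = elemmx 2 0 4.
Proof. mx33_word. Qed.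

Lemma elemmx12_word :
  Agen R 0 *m Agen R 2 *m invmx (Agen R 0) *m Agen R 1
  *m Agen R 0 *m invmx (Agen R 2) *m invmx (Agen R 0) *m Agen R 1 = elemmx 1 2 4.
Proof. mx33_word. Qed.

Lemma elemmx10_word :
  Agen R 0 *m invmx (Agen R 2) *m invmx (Agen R 0) *m Agen R 1
  *m Agen R 0 *m Agen R 2 *m invmx (Agen R 0) *m Agen R 1 = elemmx 1 0 4.
Proof. mx33_word. Qed.

Lemma SL3_sub_adm_closure (S : 'M[R]_3 -> Prop) :
  (forall A B, S A -> S B -> S (A *m B)) ->
  (forall (i : 'I_3) (n : 'I_2), S (Agen R i ^+ n.+1 *m Agen R (i + 1))) ->
  forall M, \det M = 1 -> adm_closure S M.
Proof.
move=> S_mul S_gen M det_M; have clM := adm_closureM S_mul.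
have cl_Agen i : adm_closure S (Agen R i).
  set B := Agen R (i + 1).
  have AB_unit : Agen R i *m B \in unitmx.
    by rewrite unitmxE det_mulmx !det_Agen mulr1 unitr1.
  have -> : Agen R i = Agen R i ^+ 2 *m B *m invmx (Agen R i *m B).
    by rewrite expr2 -mulmxE -(mulmxA (Agen R i)) mulmxK.
  apply: (clM); first exact/adm_closure_base/(S_gen i 1).
  apply: (adm_closureV S_mul _ AB_unit); apply: adm_closure_base.
  by rewrite -[Agen R i]expr1; exact: (S_gen i 0).
have cl_invAgen i : adm_closure S (invmx (Agen R i)).
  by apply: adm_closureV; rewrite ?unitmxE ?det_Agen ?unitr1.
have cl_elemmx4 i j : i != j -> adm_closure S (elemmx i j 4).
  elim/ord3_cases: i; elim/ord3_cases: j => //= _;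
    rewrite -?elemmx01_word -?elemmx02_word -?elemmx10_word;
    rewrite -?elemmx12_word -?elemmx20_word -?elemmx21_word;
    by repeat apply: (clM).
apply: (SL3_generated clM _ det_M) => i j t ij.
by apply: (adm_closure_elemmx S_mul t ij _ (cl_elemmx4 i j ij)); rewrite pnatr_eq0.
Qed.

End Generators.

Lemma eventually_mem (T : eqType) (X : nat -> seq T) (I : finType) (f : I -> T) :
  (forall N, {subset X N <= X N.+1}) -> (forall i, exists N, f i \in X N) ->
  exists N0, forall N i, (N0 <= N)%N -> f i \in X N.
Proof.
move=> X_mono X_cover; have [Nf fX] := fin_all_exists X_cover.
have X_le N1 N2 : (N1 <= N2)%N -> {subset X N1 <= X N2}.
  by apply: (homo_leq (r := fun A B : seq T => {subset A <= B}))
    => [A x|B A C AB BC x /AB/BC|].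
exists (\max_i Nf i) => N i le_N; apply: X_le (fX i).
exact: leq_trans (leq_bigmax i) le_N.
Qed.

Theorem proposition6p8 (R : realType) (GammaN : nat -> seq 'M[R]_3) :
  (forall N, {subset GammaN N <= GammaN N.+1}) ->
  (forall N M, M \in GammaN N -> inGamma M) ->
  (forall M, inGamma M -> exists N, M \in GammaN N) ->
  exists N0 : nat, forall N, (N0 <= N)%N ->
    zariski_dense_SL3 (semigroup_gen (fun M => M \in GammaN N)).
Proof.
move=> GammaN_mono _ GammaN_cover.
have [|N0 gensN] := eventually_mem (f := fun p : 'I_3 * 'I_2 =>
    Agen R p.1 ^+ p.2.+1 *m Agen R (p.1 + 1)) GammaN_mono.
  move=> [i n]; apply: GammaN_cover; exists i, (i + 1), n.+1; split=> //.
  by elim/ord3_cases: i.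
exists N0 => N le_N p p_S M det_M.
apply: (SL3_sub_adm_closure _ _ det_M (admissible_meval p) p_S).
- by move=> A B; apply: sg_mul.
- by move=> i n; apply/sg_base/(gensN N (i, n)).
Qed.
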